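(* There exists a constant $c_1>0$ such that for all sufficiently large $n$ with $t\le c_1 n$ and for all $k$ with $30\, x\log n\le k\le c_1 n$, the probability that the reverse reachable set of $B$ has exactly $k$ vertices is at most $\frac{1}{n^2}$.
   Context: Random graph model: $V$ is a set of $n$ vertices, $B\subseteq V$ a target set with $|B|=t$, each $v\in V$ has a prescribed out-degree $d_v$ with $2\le d_{\min}\le d_v\le d_{\max}$ (constants independent of $n$), and for each $v$ independently its out-neighbour set is chosen uniformly at random among all $d_v$-element subsets of $V$. $x$ is the number of distinct values among the $d_v$. The reverse reachable set of $B$ is the set of vertices having a directed path to a vertex of $B$. $\log$ is the natural logarithm. *)

From mathcomp Require Import all_boot.
From Stdlib Require Import Reals.
Set Implicit Arguments. Unset Strict Implicit. Unset Printing Implicit Defensive.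

Definition outcome (n : nat) := {ffun 'I_n -> {set 'I_n}}.

(* Admissible outcomes: out-neighbour set of v has exactly d v elements.
   The random model (independent uniform d_v-subsets) is the uniform
   distribution on this finite set of outcomes. *)
Definition admissible n (d : 'I_n -> nat) (f : outcome n) : bool :=
  [forall v, #|f v| == d v].

Definition edge n (f : outcome n) : rel 'I_n := fun u w => w \in f u.

Definition rev_reach n (f : outcome n) (B : {set 'I_n}) : {set 'I_n} :=
  [set u | [exists b in B, connect (edge f) u b]].

Definition prob_rr_size n (d : 'I_n -> nat) (B : {set 'I_n}) (k : nat) : R :=
  (INR #|[set f : outcome n | admissible d f && (#|rev_reach f B| == k)]|
   / INR #|[set f : outcome n | admissible d f]|)%R.

(* x = number of distinct values among the d_v *)
Definition ndistinct n (d : 'I_n -> nat) : nat :=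
  size (undup [seq d v | v <- enum 'I_n]).

From Stdlib Require Import Reals Lra.
From mathcomp Require Import all_boot all_order all_algebra.
From mathcomp Require Import Rstruct ring.
Set Implicit Arguments. Unset Strict Implicit. Unset Printing Implicit Defensive.

(* Let R be the reverse reachable set.  The event |R| = k is covered by the events R = S
   for the k-sets S containing B, and R = S says exactly that for each v outside B the
   out-set of v misses S iff v is outside S.  By independence, R = S has probability
   prod_(v in S\B) (1 - beta_v) * prod_(v notin S) beta_v, where
   beta_v = C(n-k, d_v) / C(n, d_v) <= (1 - k/n)^2 since d_v >= 2.  Trading a factor 2 for
   each v in S\B, the sum over all S factorizes, so the probability is at most
   2^(k-t) (1 - k/n + k^2/(2n^2))^(n-t) <= e^(0.9k) e^(-0.98k) <= n^(-2) when
   30 log n <= k <= n/100 and t <= n/100. *)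

Section ExpBounds.
Local Open Scope R_scope.

Lemma exp_pow (x : R) (m : nat) : exp x ^ m = exp (INR m * x).
Proof. by rewrite -Rpower_pow ?/Rpower ?ln_exp //; apply: exp_pos. Qed.

Lemma exp_le_exp (x y : R) : x <= y -> exp x <= exp y.
Proof. by case=> [/exp_increasing/Rlt_le | ->] //; apply: Rle_refl. Qed.

Lemma ln_ge0 (x : R) : 1 <= x -> 0 <= ln x.
Proof.
case=> [x_gt1 | <-]; last by rewrite ln_1; apply: Rle_refl.
by rewrite -ln_1; left; apply: ln_increasing; lra.
Qed.

Lemma two_le_exp : 2 <= exp (9/10).
Proof.
have -> : exp (9/10) = exp (9/40) ^ 4 by rewrite exp_pow; congr exp; simpl; lra.
have : (1 + 9/40) ^ 4 <= exp (9/40) ^ 4 by apply: pow_incr; have := exp_ineq1_le (9/40); lra.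
simpl; lra.
Qed.

Lemma quadratic_le_exp (y : R) : 0 <= y <= 1/100 -> 1 - y + y ^ 2 / 2 <= exp (- (995/1000) * y).
Proof. by move=> y_small; apply: Rle_trans (exp_ineq1_le _); simpl; nra. Qed.

Lemma tail_bound (n k t : nat) :
  1 <= INR n -> 30 * ln (INR n) <= INR k -> INR k <= INR n / 100 -> INR t <= INR n / 100 ->
  2 ^ (k - t) * (1 - INR k / INR n + (INR k / INR n) ^ 2 / 2) ^ (n - t) <= 1 / INR n ^ 2.
Proof.
move=> n_ge1 k_ge k_le t_le.
have k_ge0 := pos_INR k; have t_ge0 := pos_INR t; have ln_n_ge0 := ln_ge0 n_ge1.
set y := INR k / INR n.
have k_eq : INR k = y * INR n by rewrite /y /Rdiv Rmult_assoc Rinv_l; lra.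
have y_small : 0 <= y <= 1/100 by split; nra.
have t_le_n : (t <= n)%N by apply/leP; apply: INR_le; lra.
have quad_pow : (1 - y + y ^ 2 / 2) ^ (n - t) <= exp (- (98/100) * INR k).
  apply: Rle_trans (_ : _ <= exp (- (995/1000) * y) ^ (n - t)) _.
    by apply: pow_incr; split; [simpl; nra | exact: quadratic_le_exp].
  rewrite exp_pow minus_INR; last exact/leP.
  by apply: exp_le_exp; nra.
have two_pow : 2 ^ (k - t) <= exp (9/10 * INR k).
  apply: Rle_trans (_ : 2 ^ k <= _); first by apply: Rle_pow; [lra | apply/leP; exact: leq_subr].
  rewrite Rmult_comm -exp_pow; apply: pow_incr; have := two_le_exp; lra.
apply: Rle_trans (_ : exp (9/10 * INR k) * exp (- (98/100) * INR k) <= _).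
  by apply: Rmult_le_compat => //; apply: pow_le; [lra | simpl; nra].
rewrite -exp_plus.
have -> : 1 / INR n ^ 2 = exp (- (INR 2 * ln (INR n))).
  by rewrite exp_Ropp -exp_pow exp_ln /Rdiv ?Rmult_1_l //; lra.
apply: exp_le_exp; simpl; nra.
Qed.

End ExpBounds.

Lemma leq_bin_ratio m n d : m <= n -> 'C(m, d) * n ^ d <= m ^ d * 'C(n, d).
Proof.
move=> le_mn; elim: d => [|d IHd]; first by rewrite !bin0 !expn0.
rewrite -(leq_pmul2l (ltn0Sn d)) mulnA mul_bin_left [d.+1 * (_ * _)]mulnCA.
rewrite mul_bin_left !expnS.
have step : (m - d) * n <= m * (n - d).
  by rewrite mulnBl mulnBr leq_sub2l // mulnC leq_mul2l le_mn orbT.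
by move: (leq_mul IHd step); congr (_ <= _); ring.
Qed.

Section ReverseReachable.
Variables (n : nat) (f : outcome n) (B : {set 'I_n}).

Lemma sub_rev_reach : B \subset rev_reach f B.
Proof. by apply/subsetP=> b b_in; rewrite inE; apply/existsP; exists b; rewrite b_in connect0. Qed.

Lemma out_avoids_rev_reach v :
  v \notin B -> (f v \subset ~: rev_reach f B) = (v \notin rev_reach f B).
Proof.
move=> v_notB; apply/idP/idP.
- move=> out_avoid; rewrite inE.
  apply/existsP=> -[b /andP[b_in /connectP[[|w p] /= p_path p_last]]].
    by move: v_notB; rewrite -p_last b_in.
  case/andP: p_path => vw p_path.
  have : w \in rev_reach f B.
    by rewrite inE; apply/existsP; exists b; rewrite b_in; apply/connectP; exists p.
  by move/subsetP: out_avoid => /(_ w vw); rewrite inE => /negbTE ->.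
- move=> v_notR; apply/subsetP=> w w_out; rewrite inE; apply: contra v_notR.
  rewrite !inE => /existsP[b /andP[b_in w_b]]; apply/existsP; exists b.
  by rewrite b_in (connect_trans (connect1 w_out)).
Qed.

End ReverseReachable.

Section Counting.
Variables (n : nat) (d : 'I_n -> nat) (B : {set 'I_n}).

Definition consistent_outsets (S : {set 'I_n}) (v : 'I_n) : {set {set 'I_n}} :=
  [set X : {set 'I_n} | (#|X| == d v) && ((v \in B) || ((X \subset ~: S) == (v \notin S)))].

Lemma outset_consistent f v :
  admissible d f -> f v \in consistent_outsets (rev_reach f B) v.
Proof.
move=> /forallP/(_ v) card_fv; rewrite inE card_fv /=.
by case: (boolP (v \in B)) => //= v_notB; rewrite out_avoids_rev_reach.
Qed.

Lemma card_outcomes_in (F : 'I_n -> {set {set 'I_n}}) :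
  #|[set f : outcome n | [forall v, f v \in F v]]| = \prod_v #|F v|.
Proof.
transitivity #|(family F : simpl_pred (outcome n))|.
  by apply: eq_card => f; rewrite inE; apply/forallP/familyP.
by rewrite card_family foldrE big_map enumT.
Qed.

Lemma card_admissible : #|[set f : outcome n | admissible d f]| = \prod_v 'C(n, d v).
Proof.
transitivity #|[set f : outcome n | [forall v, f v \in [set X : {set 'I_n} | #|X| == d v]]]|.
  by apply: eq_card => f; rewrite !inE; apply: eq_forallb => v; rewrite inE.
by rewrite card_outcomes_in; apply: eq_bigr => v _; rewrite card_draws card_ord.
Qed.

Lemma card_rev_reach_eq_le k :
  #|[set f : outcome n | admissible d f && (#|rev_reach f B| == k)]| <=
  \sum_(S : {set 'I_n} | (B \subset S) && (#|S| == k)) \prod_v #|consistent_outsets S v|.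
Proof.
rewrite -sum1_card (partition_big (fun f => rev_reach f B) (fun S => (B \subset S) && (#|S| == k))).
  apply: leq_sum => S _; rewrite sum1dep_card -card_outcomes_in subset_leq_card //.
  apply/subsetP=> f; rewrite !inE => /andP[/andP[f_adm _] /eqP <-].
  by apply/forallP=> v; apply: outset_consistent.
by move=> f; rewrite inE => /andP[_ ->]; rewrite sub_rev_reach.
Qed.

Lemma card_consistent_outsets S v : #|consistent_outsets S v| =
  if v \in B then 'C(n, d v)
  else if v \in S then 'C(n, d v) - 'C(n - #|S|, d v) else 'C(n - #|S|, d v).
Proof.
have card_avoid : #|[set X : {set 'I_n} | X \subset ~: S & #|X| == d v]| = 'C(n - #|S|, d v).
  by rewrite cards_draws -(addKn #|S| #|~: S|) cardsC card_ord.
rewrite /consistent_outsets; case: ifP => v_in; last case: ifP => v_S /=.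
- rewrite -[n in 'C(n, _)]card_ord -card_draws.
  by apply: eq_card => X; rewrite !inE orTb andbT.
- set draws := [set X : {set 'I_n} | #|X| == d v].
  set avoid := [set X : {set 'I_n} | X \subset ~: S & #|X| == d v].
  have avoid_sub : avoid \subset draws by apply/subsetP=> X; rewrite !inE => /andP[_ ->].
  rewrite -card_avoid -/avoid -[n in 'C(n, _)]card_ord -card_draws -/draws.
  rewrite -(setIidPr avoid_sub) -cardsD.
  by apply: eq_card => X; rewrite !inE andbC; case: (_ \subset _); case: (_ == d v).
- by apply: etrans card_avoid; apply: eq_card => X; rewrite !inE andbC; case: (_ \subset _).
Qed.
End Counting.

Lemma sum_subsets_prod (R : comPzSemiRingType) (I : finType) (h : I -> bool -> R) :
  (\sum_(S : {set I}) \prod_i h i (i \in S) = \prod_i (h i true + h i false))%R.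
Proof.
rewrite bigA_distr; apply: eq_big => // S _.
by apply: eq_bigr => i _; case: (i \in S).
Qed.

Section Probability.
Import Order.TTheory GRing.Theory Num.Theory.
Local Open Scope ring_scope.
Variable F : realFieldType.
Variables (n : nat) (d : 'I_n -> nat) (B : {set 'I_n}).
Hypothesis d_le_n : forall v, (d v <= n)%N.

Definition avoid_prob (m : nat) (v : 'I_n) : F := 'C(n - m, d v)%:R / 'C(n, d v)%:R.

Lemma binomial_gt0 v : 0 < 'C(n, d v)%:R :> F.
Proof. by rewrite ltr0n bin_gt0. Qed.

Lemma avoid_prob_ge0 m v : 0 <= avoid_prob m v.
Proof. by rewrite divr_ge0 ?ler0n. Qed.

Lemma avoid_prob_le1 m v : avoid_prob m v <= 1.
Proof. by rewrite ler_pdivrMr ?binomial_gt0 // mul1r ler_nat leq_bin2l ?leq_subr. Qed.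

Lemma avoid_prob_le_sq m v : (0 < n)%N -> (2 <= d v)%N -> (m <= n)%N ->
  avoid_prob m v <= (1 - m%:R / n%:R) ^+ 2.
Proof.
move=> n_gt0 two_le_d m_le_n.
have n_pos : 0 < n%:R :> F by rewrite ltr0n.
have -> : 1 - m%:R / n%:R = (n - m)%:R / n%:R :> F.
  by rewrite natrB // mulrBl divff ?gt_eqF.
have frac_ge0 : 0 <= (n - m)%:R / n%:R :> F by rewrite divr_ge0 ?ler0n.
have frac_le1 : (n - m)%:R / n%:R <= 1 :> F by rewrite ler_pdivrMr // mul1r ler_nat leq_subr.
apply: le_trans (ler_wiXn2l frac_ge0 frac_le1 two_le_d).
rewrite expr_div_n /avoid_prob ler_pdivrMr ?binomial_gt0 // mulrAC ler_pdivlMr ?exprn_gt0 //.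
by rewrite -!natrX -!natrM ler_nat leq_bin_ratio ?leq_subr.
Qed.

Definition consistency_prob (S : {set 'I_n}) (v : 'I_n) : F :=
  if v \in B then 1 else if v \in S then 1 - avoid_prob #|S| v else avoid_prob #|S| v.

Lemma consistency_probE S v :
  #|consistent_outsets d B S v|%:R / 'C(n, d v)%:R = consistency_prob S v.
Proof.
have C_neq0 := lt0r_neq0 (binomial_gt0 v).
rewrite card_consistent_outsets /consistency_prob; case: ifP => _; first by rewrite divff.
case: ifP => // _.
by rewrite natrB ?leq_bin2l ?leq_subr // mulrBl divff.
Qed.

Lemma prob_rev_reach_le_sum k :
  #|[set f : outcome n | admissible d f && (#|rev_reach f B| == k)]|%:R /
    #|[set f : outcome n | admissible d f]|%:R <=
  \sum_(S : {set 'I_n} | (B \subset S) && (#|S| == k)) \prod_v consistency_prob S v.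
Proof.
rewrite card_admissible.
have prodC_gt0 : 0 < (\prod_v 'C(n, d v))%:R :> F.
  by rewrite natr_prod; apply: prodr_gt0 => v _; apply: binomial_gt0.
apply: (@le_trans _ _ ((\sum_(S : {set 'I_n} | (B \subset S) && (#|S| == k))
    \prod_v #|consistent_outsets d B S v|)%:R / (\prod_v 'C(n, d v))%:R)).
  by rewrite ler_wpM2r ?invr_ge0 ?ler_nat ?card_rev_reach_eq_le // ltW.
rewrite natr_sum big_distrl /= (eq_bigr (fun S => \prod_v consistency_prob S v)) // => S _.
by rewrite !natr_prod -prodf_div; apply: eq_bigr => v _; apply: consistency_probE.
Qed.

(* With the factor 2 of each v in S\B pulled out, the two weights of v add up to
   (1 + beta_v) / 2 (or to 1 on B), so the sum over all S is a product. *)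
Definition half_weight (m : nat) (v : 'I_n) (b : bool) : F :=
  if v \in B then (if b then 1 else 0) else if b then (1 - avoid_prob m v) / 2 else avoid_prob m v.

Lemma half_weight_ge0 m v b : 0 <= half_weight m v b.
Proof.
rewrite /half_weight; case: (v \in B); case: b; rewrite ?ler01 ?lexx ?avoid_prob_ge0 //.
by rewrite divr_ge0 ?subr_ge0 ?avoid_prob_le1 ?ler0n.
Qed.

Lemma prod_consistency_prob (S : {set 'I_n}) : B \subset S ->
  \prod_v consistency_prob S v = 2 ^+ (#|S| - #|B|) * \prod_v half_weight #|S| v (v \in S).
Proof.
move=> B_sub_S.
rewrite (eq_bigr (fun v => (if v \in S :\: B then 2 else 1) * half_weight #|S| v (v \in S))).
  by rewrite big_split /= -big_mkcond prodr_const cardsD (setIidPr B_sub_S).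
move=> v _; rewrite /consistency_prob /half_weight inE.
case: (boolP (v \in B)) => [v_B | _] /=; first by rewrite (subsetP B_sub_S v v_B) mul1r.
by case: (v \in S); rewrite /= ?mul1r // mulrCA divff ?mulr1 ?pnatr_eq0.
Qed.

Lemma sum_consistency_prob_le k :
  \sum_(S : {set 'I_n} | (B \subset S) && (#|S| == k)) \prod_v consistency_prob S v <=
  2 ^+ (k - #|B|) * \prod_v (if v \in B then 1 else (1 + avoid_prob k v) / 2).
Proof.
rewrite (eq_bigr (fun S : {set 'I_n} => 2 ^+ (k - #|B|) * \prod_v half_weight k v (v \in S)));
  last by move=> S /andP[B_sub_S /eqP <-]; apply: prod_consistency_prob.
rewrite -mulr_sumr ler_wpM2l ?exprn_ge0 ?ler0n //.
apply: (@le_trans _ _ (\sum_(S : {set 'I_n}) \prod_v half_weight k v (v \in S))).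
  rewrite [leRHS](bigID (fun S : {set 'I_n} => (B \subset S) && (#|S| == k))) /= lerDl.
  by apply: sumr_ge0 => S _; apply: prodr_ge0 => v _; apply: half_weight_ge0.
rewrite sum_subsets_prod.
rewrite [leLHS](eq_bigr (fun v => if v \in B then 1 else (1 + avoid_prob k v) / 2)) // => v _.
by rewrite /half_weight; case: (v \in B); rewrite ?addr0 //; field.
Qed.

Lemma prob_rev_reach_le_pow k : (0 < n)%N -> (forall v, 2 <= d v)%N -> (k <= n)%N ->
  #|[set f : outcome n | admissible d f && (#|rev_reach f B| == k)]|%:R /
    #|[set f : outcome n | admissible d f]|%:R <=
  2 ^+ (k - #|B|) * (1 - k%:R / n%:R + (k%:R / n%:R) ^+ 2 / 2) ^+ (n - #|B|) :> F.
Proof.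
move=> n_gt0 two_le_d k_le_n.
apply: le_trans (prob_rev_reach_le_sum k) _; apply: le_trans (sum_consistency_prob_le k) _.
rewrite ler_wpM2l ?exprn_ge0 ?ler0n //.
set a := 1 - _ + _.
have a_eq : a = (1 + (1 - k%:R / n%:R) ^+ 2) / 2 by rewrite /a; field; rewrite pnatr_eq0 -lt0n.
have vertex_le v : (1 + avoid_prob k v) / 2 <= a.
  by rewrite a_eq ler_wpM2r ?invr_ge0 ?ler0n // lerD2l avoid_prob_le_sq.
apply: (@le_trans _ _ (\prod_v (if v \in B then 1 else a))).
  apply: ler_prod => v _; case: (v \in B); rewrite ?lexx ?ler01 // vertex_le andbT.
  by rewrite divr_ge0 ?ler0n // addr_ge0 ?ler01 ?avoid_prob_ge0.
rewrite (eq_bigr (fun v => if v \notin B then a else 1)) => [|v _]; last by case: (v \in B).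
rewrite -big_mkcond prodr_const (@eq_card _ _ [predC B]) //.
by rewrite -[n in (n - _)%N]card_ord -(cardC B) addKn.
Qed.
End Probability.

Lemma ndistinct_gt0 n (d : 'I_n -> nat) : (0 < n)%N -> (0 < ndistinct d)%N.
Proof.
move=> n_gt0; rewrite /ndistinct lt0n size_eq0; apply/eqP.
by move=> /(congr1 (fun s => d (Ordinal n_gt0) \in s)); rewrite mem_undup map_f ?mem_enum.
Qed.

(* Restores the Stdlib meaning of [%R], which MathComp rebinds to [ring_scope]. *)
From Stdlib Require Import Reals.

Theorem lemma10 (dmax : nat) :
  exists c1 : R, (0 < c1)%R /\
  exists N : nat, forall n : nat, (N <= n)%N ->
  forall (d : 'I_n -> nat) (B : {set 'I_n}),
    (forall v, (2 <= d v <= dmax)%N) ->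
    (INR #|B| <= c1 * INR n)%R ->
    forall k : nat,
      (30 * INR (ndistinct d) * ln (INR n) <= INR k <= c1 * INR n)%R ->
      (prob_rr_size d B k <= 1 / (INR n ^ 2))%R.
Proof.
exists (1/100)%R; split; first lra.
exists dmax.+1 => n dmax_lt_n d B d_bounds B_small k [k_ge k_le].
have n_gt0 : (0 < n)%N by apply: leq_trans dmax_lt_n.
have two_le_d v : (2 <= d v)%N by case/andP: (d_bounds v).
have d_le_n v : (d v <= n)%N by case/andP: (d_bounds v) => _ /leq_trans; apply; apply: ltnW.
have n_ge1 : (1 <= INR n)%R by apply: (le_INR 1); apply/leP.
have x_ge1 : (1 <= INR (ndistinct d))%R by apply: (le_INR 1); apply/leP; apply: ndistinct_gt0.
have ln_n_ge0 := ln_ge0 n_ge1.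
have k_le_n : (k <= n)%N by apply/leP; apply: INR_le; lra.
apply: Rle_trans (tail_bound (k := k) (t := #|B|) n_ge1 _ _ _); [| nra | lra | lra].
move/RleP: (@prob_rev_reach_le_pow R _ _ B d_le_n k n_gt0 two_le_d k_le_n).
by rewrite /prob_rr_size -!INRE -!RpowE -!RdivE.
Qed.
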